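(* Let $(A,[\cdot,\cdot])$ and $(V,[\cdot,\cdot]_V)$ be Malcev algebras and $(V;[\cdot,\cdot]_V,\rho)$ an $A$-module Malcev algebra. Then $A\oplus V$ with the bracket $[x+a,y+b]_\rho=[x,y]+\rho(x)b-\rho(y)a+[a,b]_V$ ($x,y\in A$, $a,b\in V$) is a Malcev algebra.
   Context: Field of characteristic zero. A Malcev algebra is a vector space with an anti-symmetric bracket satisfying $J(x,y,[x,z])=[J(x,y,z),x]$, $J(x,y,z)=[[x,y],z]+[[z,x],y]+[[y,z],x]$. A representation of $(A,[\cdot,\cdot])$ on $V$ is a linear $\rho:A\to\mathrm{End}(V)$ with $\rho([[x,y],z])=\rho(x)\rho(y)\rho(z)-\rho(z)\rho(x)\rho(y)+\rho(y)\rho([z,x])-\rho([y,z])\rho(x)$. An $A$-module Malcev algebra $(V;[\cdot,\cdot]_V,\rho)$ consists of a Malcev algebra $(V,[\cdot,\cdot]_V)$ and a representation $\rho$ of $A$ on $V$ such that for all $x,y\in A$, $a,b,c\in V$: $\rho([x,y])[a,b]_V=\rho(x)[\rho(y)a,b]_V-[\rho(y)\rho(x)a,b]_V-[\rho(x)\rho(y)b,a]_V+\rho(y)[\rho(x)b,a]_V$; $[\rho(x)a,\rho(y)b]_V=[\rho([x,y])a,b]_V-\rho(x)[\rho(y)a,b]_V+\rho(y)\rho(x)[a,b]_V+[\rho(y)\rho(x)b,a]_V$; $[\rho(x)a,[b,c]_V]_V=[[\rho(x)b,a]_V,c]_V-\rho(x)[[b,a]_V,c]_V-[\rho(x)[a,c]_V,b]_V-[[\rho(x)c,b]_V,a]_V$.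 *)

From HB Require Import structures.
From mathcomp Require Import all_boot all_order all_algebra.
Set Implicit Arguments. Unset Strict Implicit. Unset Printing Implicit Defensive.
Import GRing.Theory.
Local Open Scope ring_scope.

Section Malcev.
Variable F : fieldType.

Definition bilinear_map (U W : lmodType F) (br : U -> U -> W) : Prop :=
  (forall x, linear (br x)) /\ (forall y, linear (fun x => br x y)).

Definition jacobian (U : lmodType F) (br : U -> U -> U) (x y z : U) : U :=
  br (br x y) z + br (br z x) y + br (br y z) x.

Definition malcev (U : lmodType F) (br : U -> U -> U) : Prop :=
  [/\ bilinear_map br,
      (forall x y, br x y = - br y x) &
      (forall x y z, jacobian br x y (br x z) = br (jacobian br x y z) x)].

Definition malcev_rep (A V : lmodType F) (brA : A -> A -> A) (rho : A -> V -> V) : Prop :=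
  [/\ (forall x, linear (rho x)),
      (forall v, linear (fun x => rho x v)) &
      (forall x y z v, rho (brA (brA x y) z) v =
         rho x (rho y (rho z v)) - rho z (rho x (rho y v))
         + rho y (rho (brA z x) v) - rho (brA y z) (rho x v))].

Definition module_malcev (A V : lmodType F) (brA : A -> A -> A)
    (brV : V -> V -> V) (rho : A -> V -> V) : Prop :=
  [/\ malcev brV, malcev_rep brA rho,
      (forall x y a b, rho (brA x y) (brV a b) =
         rho x (brV (rho y a) b) - brV (rho y (rho x a)) b
         - brV (rho x (rho y b)) a + rho y (brV (rho x b) a)),
      (forall x y a b, brV (rho x a) (rho y b) =
         brV (rho (brA x y) a) b - rho x (brV (rho y a) b)
         + rho y (rho x (brV a b)) + brV (rho y (rho x b)) a) &
      (forall x a b c, brV (rho x a) (brV b c) =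
         brV (brV (rho x b) a) c - rho x (brV (brV b a) c)
         - brV (rho x (brV a c)) b - brV (brV (rho x c) b) a)].

Definition semidirect_bracket (A V : lmodType F) (brA : A -> A -> A)
    (brV : V -> V -> V) (rho : A -> V -> V) (u w : A * V) : A * V :=
  (brA u.1 w.1, rho u.1 w.2 - rho w.1 u.2 + brV u.2 w.2).

End Malcev.

(* The A-component of the Malcev identity on A (+) V is the Malcev identity of A.
   The V-component, after expanding all brackets, is a sum of terms that are
   multilinear in the V-entries a, b, c of the three arguments; it splits
   into homogeneous parts according to the multidegree in (a, b, c).  Parts of
   degree 1 are combinations of the representation identity, parts of degree 2
   of the first two compatibility axioms of an A-module Malcev algebra, parts of
   degree 3 of the third one, and the part of degree 4 is the Malcev identity
   of V.  Verifying that the chosen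
   instances of these axioms add up to the V-component is bookkeeping modulo
   bilinearity and antisymmetry, which is done by a reflexive normaliser. *)

From HB Require Import structures.
From mathcomp Require Import all_boot all_order all_algebra.
Set Implicit Arguments. Unset Strict Implicit. Unset Printing Implicit Defensive.
Import GRing.Theory.
Local Open Scope ring_scope.

Definition biadditive (U1 U2 W : zmodType) (f : U1 -> U2 -> W) : Prop :=
  (forall x, zmod_morphism (f x)) /\ (forall y, zmod_morphism (f^~ y)).

Definition alternating (U : zmodType) (br : U -> U -> U) : Prop :=
  biadditive br /\ forall x, br x x = 0.

Definition alt_action (A V : zmodType) (brA : A -> A -> A) (brV : V -> V -> V)
    (rho : A -> V -> V) : Prop :=
  [/\ alternating brA, alternating brV & biadditive rho].

Section Biadditive.
Variables (U1 U2 W : zmodType) (f : U1 -> U2 -> W).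
Hypothesis f_biadd : biadditive f.

Definition additive_l y : {additive U1 -> W} :=
  HB.pack (f^~ y) (GRing.isZmodMorphism.Build U1 W (f^~ y) (f_biadd.2 y)).
Definition additive_r x : {additive U2 -> W} :=
  HB.pack (f x) (GRing.isZmodMorphism.Build U2 W (f x) (f_biadd.1 x)).

Lemma biadditiveDl x x' y : f (x + x') y = f x y + f x' y.
Proof. exact: (raddfD (additive_l y)). Qed.

Lemma biadditiveDr x y y' : f x (y + y') = f x y + f x y'.
Proof. exact: (raddfD (additive_r x)). Qed.

Lemma biadditive_sumzl I (r : seq I) (u : I -> U1) (c : I -> int) y :
  f (\sum_(i <- r) u i *~ c i) y = \sum_(i <- r) f (u i) y *~ c i.
Proof.
rewrite [LHS](raddf_sum (additive_l y)); apply: eq_bigr => i _.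
exact: (raddfMz (additive_l y)).
Qed.

Lemma biadditive_sumzr J (s : seq J) (w : J -> U2) (d : J -> int) x :
  f x (\sum_(j <- s) w j *~ d j) = \sum_(j <- s) f x (w j) *~ d j.
Proof.
rewrite [LHS](raddf_sum (additive_r x)); apply: eq_bigr => j _.
exact: (raddfMz (additive_r x)).
Qed.

Lemma biadditive_sumz I J (r : seq I) (s : seq J) (u : I -> U1) (w : J -> U2)
    (c : I -> int) (d : J -> int) :
  f (\sum_(i <- r) u i *~ c i) (\sum_(j <- s) w j *~ d j) =
  \sum_(i <- r) \sum_(j <- s) f (u i) (w j) *~ (c i * d j).
Proof.
rewrite biadditive_sumzl; apply: eq_bigr => i _.
rewrite biadditive_sumzr mulrz_suml; apply: eq_bigr => j _.
by rewrite -mulrzA mulrC.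
Qed.

End Biadditive.

Lemma alternating_anti (U : zmodType) (br : U -> U -> U) :
  alternating br -> forall x y, br x y = - br y x.
Proof.
move=> [hbr brxx] x y; apply/eqP; rewrite -subr_eq0 opprK.
have := brxx (x + y).
by rewrite (biadditiveDl hbr) !(biadditiveDr hbr) !brxx add0r addr0 => ->.
Qed.

(** * Normal forms of bracket expressions *)

Inductive term := Atom of nat | Br of term & term | Act of term & term
  | Add of term & term | Opp of term | Zero.

Definition nat_cmp (i j : nat) : comparison :=
  if i == j then Eq else if (i < j)%N then Lt else Gt.

Definition term_tag (t : term) : nat :=
  match t with Atom _ => 0 | Br _ _ => 1 | Act _ _ => 2 | Add _ _ => 3
  | Opp _ => 4 | Zero => 5 end.

Fixpoint term_cmp (t u : term) : comparison :=
  match t, u with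
  | Atom i, Atom j => nat_cmp i j
  | Br t1 t2, Br u1 u2 | Act t1 t2, Act u1 u2 | Add t1 t2, Add u1 u2 =>
      if term_cmp t1 u1 is Eq then term_cmp t2 u2 else term_cmp t1 u1
  | Opp t1, Opp u1 => term_cmp t1 u1
  | _, _ => nat_cmp (term_tag t) (term_tag u)
  end.

Lemma nat_cmp_eq i j : nat_cmp i j = Eq -> i = j.
Proof. by rewrite /nat_cmp; case: eqP => // _; case: ltnP. Qed.

Lemma term_cmp_eq t u : term_cmp t u = Eq -> t = u.
Proof.
elim: t u => [i|t1 IH1 t2 IH2|t1 IH1 t2 IH2|t1 IH1 t2 IH2|t1 IH1|]
  [j|u1 u2|u1 u2|u1 u2|u1|] //=; try by move/nat_cmp_eq.
- by move/nat_cmp_eq ->.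
all: try by move/IH1 ->.
all: by case: (term_cmp t1 u1) (IH1 u1) => // -> // /IH2 ->.
Qed.

(* Brackets are oriented along [term_cmp]; a bracket of two equal monomials
   vanishes, whence the coefficient 0. *)
Definition br_mono (p q : int * term) : int * term :=
  match term_cmp p.2 q.2 with
  | Lt => (p.1 * q.1, Br p.2 q.2)
  | Eq => (0, Br p.2 q.2)
  | Gt => (- (p.1 * q.1), Br q.2 p.2)
  end.

Definition act_mono (p q : int * term) : int * term := (p.1 * q.1, Act p.2 q.2).

Fixpoint monomials (t : term) : seq (int * term) :=
  match t with
  | Atom i => [:: (1, Atom i)]
  | Br t u => [seq br_mono p q | p <- monomials t, q <- monomials u]
  | Act t u => [seq act_mono p q | p <- monomials t, q <- monomials u]
  | Add t u => monomials t ++ monomials u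
  | Opp t => [seq (- p.1, p.2) | p <- monomials t]
  | Zero => [::]
  end.

Fixpoint add_mono (p : int * term) (s : seq (int * term)) : seq (int * term) :=
  match s with
  | [::] => [:: p]
  | q :: s' => if term_cmp p.2 q.2 is Eq then (p.1 + q.1, q.2) :: s'
               else q :: add_mono p s'
  end.

Definition collect (s : seq (int * term)) : seq (int * term) :=
  foldr add_mono [::] s.

Definition monomials_cancel (t : term) : bool :=
  all (fun p => p.1 == 0) (collect (monomials t)).

(* A single syntax serves both sorts; in [evalA] an [Act] node is junk and
   evaluates to 0. *)
Section Eval.
Variables (A V : zmodType) (brA : A -> A -> A) (brV : V -> V -> V).
Variables (rho : A -> V -> V) (envA : seq A) (envV : seq V).

Fixpoint evalA (t : term) : A :=
  match t with
  | Atom i => envA`_i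
  | Br t u => brA (evalA t) (evalA u)
  | Add t u => evalA t + evalA u
  | Opp t => - evalA t
  | Act _ _ | Zero => 0
  end.

Fixpoint evalV (t : term) : V :=
  match t with
  | Atom i => envV`_i
  | Br t u => brV (evalV t) (evalV u)
  | Act t u => rho (evalA t) (evalV u)
  | Add t u => evalV t + evalV u
  | Opp t => - evalV t
  | Zero => 0
  end.

End Eval.

Section Combination.
Variables (T : zmodType) (ev : term -> T).

Definition combz (s : seq (int * term)) : T := \sum_(p <- s) ev p.2 *~ p.1.

Lemma combz_cat s1 s2 : combz (s1 ++ s2) = combz s1 + combz s2.
Proof. exact: big_cat. Qed.

Lemma combz_opp s : combz [seq (- p.1, p.2) | p <- s] = - combz s.
Proof. by rewrite /combz big_map -sumrN; apply: eq_bigr => p _; rewrite mulrNz. Qed.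

Lemma combz_add_mono p s : combz (add_mono p s) = ev p.2 *~ p.1 + combz s.
Proof.
elim: s => [|q s IHs] /=; first by rewrite /combz big_seq1 big_nil addr0.
case: (term_cmp p.2 q.2) (@term_cmp_eq p.2 q.2) => [->//|_|_];
  rewrite /combz !big_cons ?mulrzDr ?addrA //.
all: by rewrite -/(combz (add_mono p s)) IHs addrCA addrA.
Qed.

Lemma combz_collect s : combz (collect s) = combz s.
Proof.
elim: s => [|p s IHs] /=; first by [].
by rewrite combz_add_mono IHs /combz big_cons.
Qed.

Lemma combz_eq0 s : all (fun p => p.1 == 0) s -> combz s = 0.
Proof.
elim: s => [|p s IHs] /=; first by rewrite /combz big_nil.
by case/andP=> /eqP p0 /IHs; rewrite /combz big_cons p0 mulr0z add0r.
Qed.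

Lemma combz_br (br : T -> T -> T) (alt_br : alternating br)
    (evBr : forall t u, ev (Br t u) = br (ev t) (ev u)) s1 s2 :
  br (combz s1) (combz s2) = combz [seq br_mono p q | p <- s1, q <- s2].
Proof.
rewrite /combz biadditive_sumz ?big_allpairs_dep; last exact: alt_br.1.
apply: eq_bigr => p _; apply: eq_bigr => q _; rewrite /br_mono.
case: (term_cmp p.2 q.2) (@term_cmp_eq p.2 q.2) => [->|_|_] //; rewrite evBr //.
  by rewrite alt_br.2 mul0rz mulr0z.
by rewrite (alternating_anti alt_br) mulrNz -mulNrz.
Qed.

End Combination.

Section Soundness.
Variables (A V : zmodType) (brA : A -> A -> A) (brV : V -> V -> V).
Variables (rho : A -> V -> V) (envA : seq A) (envV : seq V).
Hypothesis ops : alt_action brA brV rho.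

Local Notation evalA := (evalA brA envA).
Local Notation evalV := (evalV brA brV rho envA envV).

Lemma evalA_monomials t : evalA t = combz evalA (monomials t).
Proof.
have [altA _ _] := ops.
elim: t => [i|t IHt u IHu|t _ u _|t IHt u IHu|t IHt|] /=.
- by rewrite /combz big_seq1 mulr1z.
- by rewrite IHt IHu (combz_br altA).
- rewrite /combz big_allpairs_dep big1 // => p _.
  by rewrite big1 // => q _; rewrite mul0rz.
- by rewrite combz_cat IHt IHu.
- by rewrite combz_opp IHt.
- by rewrite /combz big_nil.
Qed.

Lemma evalV_monomials t : evalV t = combz evalV (monomials t).
Proof.
have [_ altV rho_biadd] := ops.
elim: t => [i|t IHt u IHu|t _ u IHu|t IHt u IHu|t IHt|] /=.
- by rewrite /combz big_seq1 mulr1z.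
- by rewrite IHt IHu (combz_br altV).
- rewrite evalA_monomials IHu /combz biadditive_sumz // big_allpairs_dep.
  by apply: eq_bigr => p _; apply: eq_bigr.
- by rewrite combz_cat IHt IHu.
- by rewrite combz_opp IHt.
- by rewrite /combz big_nil.
Qed.

Lemma evalV_eq t u : monomials_cancel (Add t (Opp u)) -> evalV t = evalV u.
Proof.
move/(combz_eq0 evalV); rewrite combz_collect -(evalV_monomials (Add t (Opp u))) /=.
by move/eqP; rewrite subr_eq0 => /eqP.
Qed.

End Soundness.

(* [alt_action_eq ops], for [ops : alt_action brA brV rho], proves an equation
   in V that holds by biadditivity and alternation alone; subterms of any other
   shape are treated as atoms. *)
Ltac list_add e l :=
  let rec mem l :=
    lazymatch l with
    | e :: _ => constr:(true)
    | _ :: ?l' => mem l'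
    | _ => constr:(false)
    end in
  lazymatch mem l with true => l | false => constr:(e :: l) end.

Ltac list_index e l :=
  lazymatch l with
  | e :: _ => constr:(0%N)
  | _ :: ?l' => let n := list_index e l' in constr:(n.+1)
  end.

Ltac atomsA brA e lA :=
  lazymatch e with
  | brA ?p ?q => let lA := atomsA brA p lA in atomsA brA q lA
  | @GRing.add _ ?p ?q => let lA := atomsA brA p lA in atomsA brA q lA
  | @GRing.opp _ ?p => atomsA brA p lA
  | @GRing.zero _ => lA
  | _ => list_add e lA
  end.

Ltac atomsV brA brV rho e lA lV :=
  let binary p q :=
    lazymatch atomsV brA brV rho p lA lV with
    | (?lA, ?lV) => atomsV brA brV rho q lA lV
    end in
  lazymatch e with
  | brV ?p ?q => binary p q
  | rho ?p ?q => let lA := atomsA brA p lA in atomsV brA brV rho q lA lV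
  | @GRing.add _ ?p ?q => binary p q
  | @GRing.opp _ ?p => atomsV brA brV rho p lA lV
  | @GRing.zero _ => constr:((lA, lV))
  | _ => let lV := list_add e lV in constr:((lA, lV))
  end.

Ltac reifyA brA e lA :=
  lazymatch e with
  | brA ?p ?q =>
      let t := reifyA brA p lA in let u := reifyA brA q lA in constr:(Br t u)
  | @GRing.add _ ?p ?q =>
      let t := reifyA brA p lA in let u := reifyA brA q lA in constr:(Add t u)
  | @GRing.opp _ ?p => let t := reifyA brA p lA in constr:(Opp t)
  | @GRing.zero _ => constr:(Zero)
  | _ => let i := list_index e lA in constr:(Atom i)
  end.

Ltac reifyV brA brV rho e lA lV :=
  lazymatch e with
  | brV ?p ?q => let t := reifyV brA brV rho p lA lV in
                 let u := reifyV brA brV rho q lA lV in constr:(Br t u)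
  | rho ?p ?q => let t := reifyA brA p lA in
                 let u := reifyV brA brV rho q lA lV in constr:(Act t u)
  | @GRing.add _ ?p ?q => let t := reifyV brA brV rho p lA lV in
                          let u := reifyV brA brV rho q lA lV in constr:(Add t u)
  | @GRing.opp _ ?p => let t := reifyV brA brV rho p lA lV in constr:(Opp t)
  | @GRing.zero _ => constr:(Zero)
  | _ => let i := list_index e lV in constr:(Atom i)
  end.

Ltac alt_action_eq ops :=
  lazymatch type of ops with
  | alt_action ?brA ?brV ?rho =>
    lazymatch goal with
    | |- ?l = ?r =>
      let TA := lazymatch type of brA with ?T -> _ => T end in
      let TV := lazymatch type of brV with ?T -> _ => T end in
      lazymatch atomsV brA brV rho l (@nil TA) (@nil TV) with
      | (?lA, ?lV) =>
        lazymatch atomsV brA brV rho r lA lV with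
        | (?lA, ?lV) =>
          let t := reifyV brA brV rho l lA lV in
          let u := reifyV brA brV rho r lA lV in
          refine (@evalV_eq _ _ brA brV rho lA lV ops t u _);
          vm_compute; reflexivity
        end
      end
    end
  end.

(** * The semidirect product *)

Lemma linear2_biadditive (F : pzRingType) (U1 U2 W : lmodType F) (f : U1 -> U2 -> W) :
  (forall x, linear (f x)) -> (forall y, linear (f^~ y)) -> biadditive f.
Proof. by move=> f1 f2; split=> ?; apply: zmod_morphism_linear. Qed.

Lemma antisym_alternating (F : fieldType) (U : lmodType F) (br : U -> U -> U) :
  [pchar F] =i pred0 -> bilinear_map br -> (forall x y, br x y = - br y x) ->
  alternating br.
Proof.
move=> charF0 [br1 br2] anti; split; first exact: linear2_biadditive.
move=> x; have two_ne0 : (2%:R : F) != 0 by rewrite (pcharf0P _).1.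
have : (2%:R : F) *: br x x == 0 by rewrite scaler_nat mulr2n {1}anti addNr.
by rewrite scaler_eq0 (negPf two_ne0) => /eqP.
Qed.

Lemma eq_add_cancel (T : zmodType) (l r G1 G2 : T) :
  l = r -> G1 + l = G2 + r -> G1 = G2.
Proof. by move=> ->; apply: addIr. Qed.

Section SemidirectProduct.
Variables (F : fieldType) (A V : lmodType F).
Variables (brA : A -> A -> A) (brV : V -> V -> V) (rho : A -> V -> V).
Hypotheses (charF0 : [pchar F] =i pred0) (malA : malcev brA) (malV : malcev brV).
Hypothesis modV : module_malcev brA brV rho.

Local Notation sb := (semidirect_bracket brA brV rho).

Lemma module_alt_action : alt_action brA brV rho.
Proof.
have [bilA antiA _] := malA; have [bilV antiV _] := malV.
have [_ [rho1 rho2 _] _ _ _] := modV.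
split; first exact: antisym_alternating charF0 bilA antiA.
  exact: antisym_alternating charF0 bilV antiV.
exact: linear2_biadditive rho1 rho2.
Qed.

Lemma semidirect_bilinear : bilinear_map sb.
Proof.
have [[brA1 brA2] _ _] := malA; have [[brV1 brV2] _ _] := malV.
have [_ [rho1 rho2 _] _ _ _] := modV.
split=> [[x a] k [y b] [y' b'] | [y b] k [x a] [x' a']]; congr (_, _) => /=;
  rewrite ?brA1 ?brA2 ?rho1 ?rho2 ?brV1 ?brV2 ?scalerDr ?scalerN //;
  alt_action_eq module_alt_action.
Qed.

Lemma semidirect_anti u w : sb u w = - sb w u.
Proof.
have [_ antiA _] := malA; case: u w => [x a] [y b]; congr (_, _) => /=.
  exact: antiA.
alt_action_eq module_alt_action.
Qed.

Lemma semidirect_malcev_snd x y z a b c :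
  (jacobian sb (x, a) (y, b) (sb (x, a) (z, c))).2 =
  (sb (jacobian sb (x, a) (y, b) (z, c)) (x, a)).2.
Proof.
have [_ _ malV_id] := malV; have [_ [_ _ rep] m1 m2 m3] := modV.
(* One group of instances per multidegree in (a, b, c): (0,0,1), (1,0,0),
   (0,1,0), (1,0,1), (1,1,0), (0,1,1), (1,1,1), (2,0,0), (2,0,1), (2,1,0),
   (2,1,1). *)
apply: (eq_add_cancel (esym (rep x x y c))).
apply: (eq_add_cancel (rep x y z a)); apply: (eq_add_cancel (rep x z y a)).
apply: (eq_add_cancel (rep y z x a)); apply: (eq_add_cancel (rep z x y a)).
apply: (eq_add_cancel (esym (rep x z x b))).
apply: (eq_add_cancel (esym (m1 x y a c))); apply: (eq_add_cancel (esym (m2 x y c a))).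
apply: (eq_add_cancel (esym (m1 x z b a))); apply: (eq_add_cancel (esym (m2 z x a b))).
apply: (eq_add_cancel (esym (m2 x x b c))).
apply: (eq_add_cancel (m3 x a b c)); apply: (eq_add_cancel (m3 x a c b)).
apply: (eq_add_cancel (m3 x b c a)); apply: (eq_add_cancel (m3 x c a b)).
apply: (eq_add_cancel (esym (m2 y z a a))).
apply: (eq_add_cancel (esym (m3 y a c a))).
apply: (eq_add_cancel (esym (m3 z a a b))).
apply: (eq_add_cancel (esym (malV_id a b c))).
rewrite /jacobian /=; alt_action_eq module_alt_action.
Qed.

Lemma semidirect_malcev_id u v w :
  jacobian sb u v (sb u w) = sb (jacobian sb u v w) u.
Proof.
have [_ _ malA_id] := malA; case: u v w => [x a] [y b] [z c].
apply: injective_projections; [exact: malA_id | exact: semidirect_malcev_snd].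
Qed.

End SemidirectProduct.

Theorem proposition4p2 (F : fieldType) (charF0 : [pchar F] =i pred0)
  (A V : lmodType F) (brA : A -> A -> A) (brV : V -> V -> V) (rho : A -> V -> V) :
  malcev brA -> malcev brV -> module_malcev brA brV rho ->
  malcev (semidirect_bracket brA brV rho : A * V -> A * V -> A * V).
Proof.
move=> malA malV modV; split.
- exact: semidirect_bilinear charF0 malA malV modV.
- exact: semidirect_anti charF0 malA malV modV.
- exact: semidirect_malcev_id charF0 malA malV modV.
Qed.
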